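(* Let $G$ be a graph and $\mathcal H,\mathcal K$ families of subgraphs of $G$, each member inducing a connected subgraph of $G$. If $G$ has a tree decomposition that is $\mathcal K$-easy and $k$-sparse with respect to $\mathcal H$, then $(G,\mathcal H,\mathcal K)$ admits an intersection support of treewidth at most $k$.
   Context: A subgraph $H$ of $G$ is identified with its vertex set $V(H)$. For $K\in\mathcal K$, $\mathcal H_K=\{H\in\mathcal H: V(H)\cap V(K)\ne\emptyset\}$. An intersection support for $(G,\mathcal H,\mathcal K)$ is a graph $\tilde Q$ with vertex set $\mathcal H$ such that $\tilde Q[\mathcal H_K]$ is connected for every $K\in\mathcal K$. For a tree decomposition $(T,\{B_z\})$ of $G$ and an edge $\{x,y\}\in E(T)$, the adhesion set is $A_{xy}=B_x\cap B_y$. The tree decomposition is $\mathcal K$-easy if for every $K\in\mathcal K$ and every adhesion set $A$ with $A\cap V(K)\ne\emptyset$ there is $H\in\mathcal H_K$ with $V(H)\cap V(K)\cap A\ne\emptyset$. It is $k$-sparse with respect to $\mathcal H$ if every bag intersects at most $k$ members of $\mathcal H$. *)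

From mathcomp Require Import all_boot.
Set Implicit Arguments. Unset Strict Implicit. Unset Printing Implicit Defensive.

Definition simple_graph (V : finType) (e : rel V) : Prop :=
  symmetric e /\ irreflexive e.

(* A vertex set A induces a connected subgraph: any two vertices of A are
   joined by a path all of whose vertices lie in A (vacuous for A empty). *)
Definition induced_connected (V : finType) (e : rel V) (A : {set V}) : Prop :=
  forall x y, x \in A -> y \in A ->
    connect (fun a b => [&& a \in A, b \in A & e a b]) x y.

(* A tree: nonempty, connected, and with exactly #|Z| - 1 (undirected) edges;
   ordered pairs (x,y) with eT x y are counted, hence the factor 2. *)
Definition is_tree (Z : finType) (eT : rel Z) : Prop :=
  [/\ simple_graph eT, 0 < #|Z|, induced_connected eT [set: Z] &
      #|[set p : Z * Z | eT p.1 p.2]| = 2 * (#|Z| - 1)].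

Definition tree_decomposition (V : finType) (e : rel V)
  (Z : finType) (eT : rel Z) (B : Z -> {set V}) : Prop :=
  [/\ is_tree eT,
      (forall v : V, exists z, v \in B z),
      (forall u v : V, e u v -> exists z, (u \in B z) && (v \in B z)) &
      (forall v : V, induced_connected eT [set z | v \in B z])].

Definition treewidth_le (V : finType) (e : rel V) (k : nat) : Prop :=
  exists (Z : finType) (eT : rel Z) (B : Z -> {set V}),
    tree_decomposition e eT B /\ forall z, #|B z| <= k.+1.

Definition H_of (V : finType) (I : finType) (Hf : I -> {set V}) (K : {set V})
  : {set I} := [set i | Hf i :&: K != set0].

Definition intersection_support (V I J : finType) (Hf : I -> {set V})
  (Kf : J -> {set V}) (Q : rel I) : Prop :=
  simple_graph Q /\ forall j : J, induced_connected Q (H_of Hf (Kf j)).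

Definition K_easy (V I J Z : finType) (Hf : I -> {set V}) (Kf : J -> {set V})
  (eT : rel Z) (B : Z -> {set V}) : Prop :=
  forall (j : J) (x y : Z), eT x y ->
    Kf j :&: (B x :&: B y) != set0 ->
    exists i : I, Hf i :&: Kf j :&: (B x :&: B y) != set0.

Definition k_sparse (V I Z : finType) (Hf : I -> {set V})
  (B : Z -> {set V}) (k : nat) : Prop :=
  forall z : Z, #|[set i | Hf i :&: B z != set0]| <= k.

From mathcomp Require Import all_boot.
From mathcomp Require Import zify.
Set Implicit Arguments. Unset Strict Implicit. Unset Printing Implicit Defensive.

(** Join two members of [H] when some bag meets both.  For each member [K] of
    [𝒦], the bags meeting the connected set [K] are linked through tree edges whose
    adhesion meets [K]; by [K]-easiness such an adhesion also meets a member of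
    [H_K], which then lies in both end bags, so [Q[H_K]] is connected.  The tree
    decomposition itself, with bag [{i | H_i meets B_z}] at node [z], is a tree
    decomposition of [Q] with bags of size at most [k], since the nodes whose bag
    meets a connected [H_i] are linked in the same way; empty members, which meet
    no bag, are given private leaves. *)

Section Connect.

Variables (T T' : finType) (r : rel T) (r' : rel T').

Lemma connect_preserve (P : T -> Prop) x y :
  connect r x y -> P x -> (forall a b, r a b -> P a -> P b) -> P y.
Proof.
move=> /connectP [p pth ->] Px step.
elim: p x pth Px => [|a p IH] x //= /andP [rxa pth] Px.
exact: IH pth (step _ _ rxa Px).
Qed.

Lemma connect_homo (f : T -> T') x y :
  (forall a b, r a b -> connect r' (f a) (f b)) ->
  connect r x y -> connect r' (f x) (f y).
Proof.
move=> homo_f cxy.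
apply: (connect_preserve (P := fun c => connect r' (f x) (f c)) cxy) => //.
move=> a b rab cxa.
exact: connect_trans cxa (homo_f a b rab).
Qed.

End Connect.

Lemma connect_setT (T : finType) (r : rel T) :
  connect (fun a b => [&& a \in [set: T], b \in [set: T] & r a b]) =2 connect r.
Proof. by apply: eq_connect => a b; rewrite !in_setT. Qed.

Section AddLeaves.

Variables (Z I : finType) (eT : rel Z) (z0 : Z).

Definition add_leaves : rel (Z + I) :=
  fun a b => match a, b with
  | inl x, inl y => eT x y
  | inl x, inr _ => x == z0
  | inr _, inl y => y == z0
  | inr _, inr _ => false
  end.

Lemma card_add_leaves_edges :
  #|[set p : (Z + I) * (Z + I) | add_leaves p.1 p.2]|
    = #|[set p : Z * Z | eT p.1 p.2]| + 2 * #|I|.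
Proof.
pose f (p : Z * Z) := (@inl Z I p.1, @inl Z I p.2).
pose g (i : I) := (@inl Z I z0, @inr Z I i).
pose h (i : I) := (@inr Z I i, @inl Z I z0).
have f_inj : injective f by move=> [a b] [c d] [-> ->].
have g_inj : injective g by move=> a b [->].
have h_inj : injective h by move=> a b [->].
set E := [set p : Z * Z | eT p.1 p.2].
have -> : [set p | add_leaves p.1 p.2] = f @: E :|: g @: setT :|: h @: setT.
  apply/setP => -[[x|i] [y|j]]; rewrite !inE /=.
  - rewrite -[(inl x, inl y)]/(f (x, y)) (mem_imset _ _ f_inj) inE /=.
    by case: (eT x y) => //=; apply/esym/norP; split;
      apply/negP => /imsetP [? _ []].
  - case: (eqVneq x z0) => [->|ne].
      by rewrite -[(inl z0, inr j)]/(g j) imset_f ?orbT.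
    apply/esym/norP; split; [apply/norP; split|];
      apply/negP => /imsetP [? _ [xz _]] //; by rewrite xz eqxx in ne.
  - case: (eqVneq y z0) => [->|ne].
      by rewrite -[(inr i, inl z0)]/(h i) imset_f ?orbT.
    apply/esym/norP; split; [apply/norP; split|];
      apply/negP => /imsetP [? _ [_ yz]] //; by rewrite yz eqxx in ne.
  - by apply/esym/norP; split; [apply/norP; split|];
      apply/negP => /imsetP [? _ []].
have fg_disj : f @: E :&: g @: setT = set0.
  apply/setP => q; rewrite !inE.
  by apply/negP => /andP [/imsetP [? _ ->] /imsetP [? _ []]].
have fgh_disj : (f @: E :|: g @: setT) :&: h @: setT = set0.
  apply/setP => q; rewrite !inE.
  by apply/negP => /andP [/orP [] /imsetP [? _ ->] /imsetP [? _ []]].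
rewrite cardsU fgh_disj cards0 subn0 cardsU fg_disj cards0 subn0.
by rewrite !card_imset // cardsT; lia.
Qed.

Lemma add_leaves_tree : is_tree eT -> is_tree add_leaves.
Proof.
move=> [[eT_sym eT_irr] Z_gt0 eT_conn eT_card].
have leaves_sym : symmetric add_leaves by move=> [x|i] [y|j] //=; apply: eT_sym.
have to_root : forall c, connect add_leaves (inl z0) c.
  move=> [x|i]; last by apply: connect1; rewrite /= eqxx.
  apply: (connect_homo (r := eT)) => [a b ab|]; first exact: connect1.
  by rewrite -connect_setT; apply: eT_conn; rewrite in_setT.
split.
- by split=> // -[x|i] //=; apply: eT_irr.
- by rewrite card_sum; lia.
- move=> a b _ _; rewrite connect_setT.
  by apply: connect_trans (to_root b); rewrite (sym_connect_sym leaves_sym).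
- by rewrite card_add_leaves_edges eT_card card_sum; lia.
Qed.

End AddLeaves.

Section Decomposition.

Variables (V Z : finType) (e : rel V) (eT : rel Z) (B : Z -> {set V}).
Hypothesis td : tree_decomposition e eT B.

Definition adhesion_rel (S : {set V}) : rel Z :=
  fun x y => eT x y && (S :&: (B x :&: B y) != set0).

Lemma connect_adhesion_bags (S : {set V}) v x y :
  v \in S -> v \in B x -> v \in B y -> connect (adhesion_rel S) x y.
Proof.
have [_ _ _ v_conn] := td => vS vx vy.
have := v_conn v x y; rewrite !inE => /(_ vx vy).
apply: connect_sub => a b /and3P []; rewrite !inE => va vb ab.
by apply: connect1; rewrite /adhesion_rel ab; apply/set0Pn; exists v;
  rewrite !inE vS va vb.
Qed.

Lemma connect_adhesion_meeting (S : {set V}) u w z z' :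
  induced_connected e S -> u \in S -> w \in S -> u \in B z -> w \in B z' ->
  connect (adhesion_rel S) z z'.
Proof.
have [_ _ edge_cov _] := td => S_conn uS wS uz wz'.
pose P v := v \in S -> forall x, v \in B x -> connect (adhesion_rel S) z x.
suff : P w by apply.
apply: (connect_preserve (S_conn u w uS wS)) => [_ x ux|a b].
  exact: connect_adhesion_bags uS uz ux.
move=> /and3P [aS bS ab] Pa _ x bx.
have [y /andP [ay by_]] := edge_cov a b ab.
exact: connect_trans (Pa aS y ay) (connect_adhesion_bags bS by_ bx).
Qed.

End Decomposition.

Section BagGraph.

Variables (V I Z : finType) (Hf : I -> {set V}) (B : Z -> {set V}).

Lemma mem_H_of (K : {set V}) i v : v \in Hf i -> v \in K -> i \in H_of Hf K.
Proof. by move=> vi vK; rewrite inE; apply/set0Pn; exists v; rewrite !inE vi vK. Qed.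

Definition bag_graph : rel I := fun i j =>
  (i != j) && [exists z, (i \in H_of Hf (B z)) && (j \in H_of Hf (B z))].

Lemma bag_graph_simple : simple_graph bag_graph.
Proof.
split=> [i j|i]; last by rewrite /bag_graph eqxx.
rewrite /bag_graph eq_sym; congr andb.
by apply/existsP/existsP => -[z /andP [iz jz]]; exists z; rewrite iz jz.
Qed.

Lemma bag_graph_support (J : finType) (e : rel V) (eT : rel Z)
    (Kf : J -> {set V}) :
  tree_decomposition e eT B -> K_easy Hf Kf eT B ->
  (forall j, induced_connected e (Kf j)) ->
  intersection_support Hf Kf bag_graph.
Proof.
move=> td easy K_conn; split=> [|j]; first exact: bag_graph_simple.
set HK := H_of Hf (Kf j); move=> i0 i1 i0K i1K.
set R := fun a b => [&& a \in HK, b \in HK & bag_graph a b].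
pose W z := forall i, i \in HK -> i \in H_of Hf (B z) -> connect R i0 i.
have W_from z i : i \in HK -> i \in H_of Hf (B z) -> connect R i0 i -> W z.
  move=> iK iz c0i i' i'K i'z; case: (eqVneq i i') => [<- //|ne].
  apply: connect_trans c0i (connect1 _).
  by rewrite /R iK i'K /bag_graph ne; apply/existsP; exists z; rewrite iz i'z.
have [_ cov _ _] := td.
have /set0Pn [u0] : Hf i0 :&: Kf j != set0 by move: i0K; rewrite inE.
rewrite !inE => /andP [u0H u0K].
have /set0Pn [u1] : Hf i1 :&: Kf j != set0 by move: i1K; rewrite inE.
rewrite !inE => /andP [u1H u1K].
have [z0 u0z0] := cov u0; have [z1 u1z1] := cov u1.
suff : W z1 by apply=> //; exact: mem_H_of u1H u1z1.
apply: (connect_preserve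
  (connect_adhesion_meeting td (K_conn j) u0K u1K u0z0 u1z1)).
  exact: W_from i0K (mem_H_of u0H u0z0) (connect0 _ _).
move=> x y /andP [xy adh] Wx.
have [i /set0Pn [w]] := easy j x y xy adh.
rewrite !inE => /andP [/andP [wi wK] /andP [wx wy]].
have iK := mem_H_of wi wK.
exact: W_from iK (mem_H_of wi wy) (Wx i iK (mem_H_of wi wx)).
Qed.

Definition leaf_bags (a : Z + I) : {set I} :=
  match a with
  | inl z => H_of Hf (B z)
  | inr i => if Hf i == set0 then [set i] else set0
  end.

Lemma leaf_bags_decomposition (e : rel V) (eT : rel Z) (z0 : Z) :
  tree_decomposition e eT B -> (forall i, induced_connected e (Hf i)) ->
  tree_decomposition bag_graph (add_leaves (I := I) eT z0) leaf_bags.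
Proof.
move=> td H_conn; have [tree cov _ _] := td.
split.
- exact: add_leaves_tree.
- move=> i; case: (eqVneq (Hf i) set0) => [Hi0|/set0Pn [v vi]].
    by exists (inr i); rewrite /= Hi0 eqxx inE.
  have [z vz] := cov v.
  by exists (inl z); exact: mem_H_of vi vz.
- move=> i j /andP [_ /existsP [z /andP [iz jz]]].
  by exists (inl z); rewrite /= iz jz.
- move=> i; set S := [set a | i \in leaf_bags a].
  have leaf_only (Hi0 : Hf i = set0) a : a \in S -> a = inr i.
    case: a => [z|j]; rewrite /S !inE /=; first by rewrite Hi0 set0I eqxx.
    by case: (Hf j == set0); rewrite ?inE // => /eqP ->.
  have inner_only (Hi : Hf i != set0) a : a \in S ->
      exists2 z, a = inl z & Hf i :&: B z != set0.
    case: a => [z|j]; rewrite /S !inE /=; first by exists z.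
    case: (eqVneq (Hf j) set0) => Hj0; rewrite ?inE // => /eqP eij.
    by move: Hi; rewrite eij Hj0 eqxx.
  case: (eqVneq (Hf i) set0) => [Hi0|Hi] a b.
    by move=> /(leaf_only Hi0) -> /(leaf_only Hi0) ->.
  move=> /(inner_only Hi) [x -> ix] /(inner_only Hi) [y -> iy].
  have /set0Pn [u] := ix; rewrite !inE => /andP [ui ux].
  have /set0Pn [w] := iy; rewrite !inE => /andP [wi wy].
  apply: connect_homo (connect_adhesion_meeting td (H_conn i) ui wi ux wy).
  move=> c d /andP [cd /set0Pn [v]]; rewrite !inE => /and3P [vi vc vd].
  apply: connect1; rewrite /S !inE /= cd andbT.
  by apply/andP; split; apply/set0Pn; exists v; rewrite inE vi ?vc ?vd.
Qed.

Lemma card_leaf_bags k :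
  (forall z, #|H_of Hf (B z)| <= k) -> forall a, #|leaf_bags a| <= k.+1.
Proof.
move=> sparse [z|i] /=; first exact: leqW.
by case: (Hf i == set0); rewrite ?cards1 ?cards0.
Qed.

End BagGraph.

Theorem mainTheorem11 (V : finType) (e : rel V) (I J : finType)
  (Hf : I -> {set V}) (Kf : J -> {set V}) (k : nat) :
  simple_graph e ->
  (forall i, induced_connected e (Hf i)) ->
  (forall j, induced_connected e (Kf j)) ->
  (exists (Z : finType) (eT : rel Z) (B : Z -> {set V}),
     [/\ tree_decomposition e eT B, K_easy Hf Kf eT B & k_sparse Hf B k]) ->
  exists Q : rel I, intersection_support Hf Kf Q /\ treewidth_le Q k.
Proof.
move=> _ H_conn K_conn [Z [eT [B [td easy sparse]]]].
have [[_ /card_gt0P [z0 _] _ _] _ _ _] := td.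
exists (bag_graph Hf B); split; first exact: bag_graph_support td easy K_conn.
exists (Z + I)%type, (add_leaves (I := I) eT z0), (leaf_bags Hf B); split.
  exact: leaf_bags_decomposition td H_conn.
exact: card_leaf_bags sparse.
Qed.
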